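(* Let $A$ be an arrangement of hyperplanes in general position in $\mathbb{R}^d$ and let $q\in\mathbb{R}^d$. Then (1) $\mathrm{RD}(A,q)=\mathrm{TD}(A^*_q,q)$; (2) $\mathrm{HTvD}(A,q)=\mathrm{TvD}(A^*_q,q)$; (3) $\mathrm{HED}(A,q)=\mathrm{ED}(A^*_q,q)$.
   Context: A hyperplane arrangement is a finite set of affine hyperplanes in $\mathbb{R}^d$. Regression depth $\mathrm{RD}(A,q)$: the minimum, over all closed rays emanating from $q$, of the number of hyperplanes of $A$ intersected by or parallel to the ray (a hyperplane containing $q$ is intersected by every ray from $q$). Hyperplane Tverberg depth $\mathrm{HTvD}(A,q)$: the maximum $r$ such that $A$ can be partitioned into $r$ parts with $q$ having regression depth $\ge 1$ with respect to each part. An arrangement $A$ $k$-encloses $q$ if $A$ can be partitioned into $d+1$ pairwise disjoint subsets $A_1,\dots,A_{d+1}$, each of size $k$, such that for every choice $h_1\in A_1,\dots,h_{d+1}\in A_{d+1}$ we have $\mathrm{RD}(\{h_1,\dots,h_{d+1}\},q)\ge 1$; the hyperplane enclosing depth $\mathrm{HED}(A,q)$ is the maximum $k$ such that some sub-arrangement of $A$ $k$-encloses $q$. Duality: for $h\in A$, let $p(h)$ be the point of $h$ closest to $q$; $A^*_q$ is the multiset $\{p(h): h\in A\}$ (hyperplanes through $q$ give copies of $q$). For a finite (multi)set $S$ of points and a point $q$: the Tukey depth $\mathrm{TD}(S,q)$ is the minimum number of points of $S$ in a closed half-space containing $q$; the Tverberg depth $\mathrm{TvD}(S,q)$ is the maximum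 $r$ such that $S$ can be partitioned into $r$ parts whose convex hulls all contain $q$; a point set $S'$ $k$-encloses $q$ if it can be partitioned into $d+1$ disjoint parts of size $k$ such that $q$ lies in the convex hull of every choice of one point from each part, and the enclosing depth $\mathrm{ED}(S,q)$ is the maximum $k$ such that some subset of $S$ $k$-encloses $q$. *)

From HB Require Import structures.
From mathcomp Require Import all_boot all_order all_algebra.
From mathcomp Require Import boolp classical_sets reals.
Set Implicit Arguments. Unset Strict Implicit. Unset Printing Implicit Defensive.
Import Order.TTheory GRing.Theory Num.Theory.
Local Open Scope ring_scope.

Section Defs.
Variables (R : realType) (d : nat).

Definition dot (u v : 'rV[R]_d) : R := \sum_(k < d) u 0 k * v 0 k.
Definition sqdist (u v : 'rV[R]_d) : R := \sum_(k < d) (u 0 k - v 0 k) ^+ 2.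

(* minimum / maximum of a set of naturals (0 if it does not exist) *)
Definition natmin (P : set nat) : nat :=
  xget 0%N [set k | P k /\ forall j, P j -> (k <= j)%N].
Definition natmax (P : set nat) : nat :=
  xget 0%N [set k | P k /\ forall j, P j -> (j <= k)%N].

(* an affine hyperplane {x | hn . x = hb}, with hn <> 0 (required separately) *)
Record hyp := Hyp { hn : 'rV[R]_d ; hb : R }.
Definition on_hyp (h : hyp) (x : 'rV[R]_d) : Prop := dot (hn h) x = hb h.

Definition general_position (I : finType) (A : I -> hyp) : Prop :=
  (forall i, hn (A i) != 0) /\
  (forall (S : {set I}) (c : I -> R), (#|S| <= d)%N ->
     \sum_(i in S) c i *: hn (A i) = 0 -> forall i, i \in S -> c i = 0) /\
  (forall (S : {set I}), #|S| = d.+1 ->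
     ~ exists x, forall i, i \in S -> on_hyp (A i) x).

Definition ray_hits (h : hyp) (q v : 'rV[R]_d) : Prop :=
  (exists t : R, 0 <= t /\ on_hyp h (q + t *: v)) \/ dot (hn h) v = 0.

Definition RD (J : finType) (A : J -> hyp) (S : {set J}) (q : 'rV[R]_d) : nat :=
  natmin [set k | exists v : 'rV[R]_d, v != 0 /\
            k = #|[set i in S | `[< ray_hits (A i) q v >] ]| ].

Definition HTvD (I : finType) (A : I -> hyp) (q : 'rV[R]_d) : nat :=
  natmax [set r | exists f : I -> 'I_r,
            forall j : 'I_r, (1 <= RD A [set i | f i == j] q)%N ].

Definition parts_ok (I : finType) (P : 'I_d.+1 -> {set I}) (k : nat) : Prop :=
  (forall j, #|P j| = k) /\
  (forall j1 j2, j1 != j2 -> [disjoint P j1 & P j2]).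

Definition HED (I : finType) (A : I -> hyp) (q : 'rV[R]_d) : nat :=
  natmax [set k | exists P : 'I_d.+1 -> {set I}, parts_ok P k /\
            forall s : 'I_d.+1 -> I, (forall j, s j \in P j) ->
              (1 <= RD (fun j => A (s j)) [set: 'I_d.+1] q)%N ].

Definition closest (h : hyp) (q : 'rV[R]_d) : 'rV[R]_d :=
  xget 0 [set x | on_hyp h x /\ forall y, on_hyp h y -> sqdist q x <= sqdist q y].

Definition dual (I : finType) (A : I -> hyp) (q : 'rV[R]_d) : I -> 'rV[R]_d :=
  fun i => closest (A i) q.

Definition in_conv (J : finType) (p : J -> 'rV[R]_d) (S : {set J}) (q : 'rV[R]_d)
  : Prop :=
  exists w : J -> R, (forall j, 0 <= w j) /\ \sum_(j in S) w j = 1 /\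
    \sum_(j in S) w j *: p j = q.

Definition TD (I : finType) (p : I -> 'rV[R]_d) (q : 'rV[R]_d) : nat :=
  natmin [set k | exists (c : 'rV[R]_d) (e : R), c != 0 /\ dot c q <= e /\
            k = #|[set i | dot c (p i) <= e]| ].

Definition TvD (I : finType) (p : I -> 'rV[R]_d) (q : 'rV[R]_d) : nat :=
  natmax [set r | exists f : I -> 'I_r,
            forall j : 'I_r, in_conv p [set i | f i == j] q ].

Definition ED (I : finType) (p : I -> 'rV[R]_d) (q : 'rV[R]_d) : nat :=
  natmax [set k | exists P : 'I_d.+1 -> {set I}, parts_ok P k /\
            forall s : 'I_d.+1 -> I, (forall j, s j \in P j) ->
              in_conv (fun j => p (s j)) [set: 'I_d.+1] q ].

End Defs.

From HB Require Import structures.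
From mathcomp Require Import all_boot all_order all_algebra.
From mathcomp Require Import boolp classical_sets reals.
From mathcomp Require Import ring lra.
Set Implicit Arguments. Unset Strict Implicit. Unset Printing Implicit Defensive.
Import Order.TTheory GRing.Theory Num.Theory.
Local Open Scope ring_scope.

(* For a hyperplane h with nonzero normal and a point q, let
   p(h) be the point of h closest to q.  The basic observation is that the ray
   from q in direction v meets (or is parallel to) h iff dot v (p(h) - q) >= 0,
   i.e. iff p(h) lies in the closed half-space through q with inner normal v.
   Counting hyperplanes hit by a ray is therefore counting dual points in a
   closed half-space bounded at q, which gives RD = TD.  In particular q has
   regression depth >= 1 w.r.t. a family iff no direction strictly separates
   its dual points from q, which by Gordan's theorem of the alternative holds
   iff q is in their convex hull; applied to each part of a partition this
   gives HTvD = TvD and HED = ED. *)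

Section Dot.
Variables (R : realType) (d : nat).
Implicit Types u v x y : 'rV[R]_d.

Lemma dotC u v : dot u v = dot v u.
Proof. by apply: eq_bigr => k _; rewrite mulrC. Qed.

Lemma dotDl u v x : dot (u + v) x = dot u x + dot v x.
Proof. by rewrite /dot -big_split; apply: eq_bigr => k _; rewrite mxE mulrDl. Qed.

Lemma dotZl a u x : dot (a *: u) x = a * dot u x.
Proof. by rewrite /dot mulr_sumr; apply: eq_bigr => k _; rewrite mxE mulrA. Qed.

Lemma dotNl u x : dot (- u) x = - dot u x.
Proof. by rewrite -scaleN1r dotZl mulN1r. Qed.

Lemma dotBl u v x : dot (u - v) x = dot u x - dot v x.
Proof. by rewrite dotDl dotNl. Qed.

Lemma dot0l x : dot 0 x = 0.
Proof. by rewrite -(scale0r 0) dotZl mul0r. Qed.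

Lemma dotDr u v x : dot x (u + v) = dot x u + dot x v.
Proof. by rewrite !(dotC x) dotDl. Qed.

Lemma dotZr a u x : dot x (a *: u) = a * dot x u.
Proof. by rewrite !(dotC x) dotZl. Qed.

Lemma dotBr u v x : dot x (u - v) = dot x u - dot x v.
Proof. by rewrite !(dotC x) dotBl. Qed.

Lemma dot0r x : dot x 0 = 0.
Proof. by rewrite dotC dot0l. Qed.

Lemma dot_sumr (J : finType) (P : pred J) (F : J -> 'rV[R]_d) x :
  dot x (\sum_(i | P i) F i) = \sum_(i | P i) dot x (F i).
Proof.
rewrite /dot; under eq_bigr do rewrite summxE mulr_sumr.
by rewrite exchange_big.
Qed.

Lemma dot_self_ge0 x : 0 <= dot x x.
Proof. by apply: sumr_ge0 => k _; rewrite -expr2 sqr_ge0. Qed.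

Lemma dot_self_eq0 x : (dot x x == 0) = (x == 0).
Proof.
apply/eqP/eqP => [x0|->]; last exact: dot0l.
apply/rowP => k; rewrite mxE.
have sq0 : \sum_(k : 'I_d) (x 0 k) ^+ 2 = 0.
  by rewrite -[RHS]x0; apply: eq_bigr => i _; rewrite expr2.
have := @psumr_eq0P _ _ xpredT _ (fun k _ => sqr_ge0 (x 0 k)) sq0 k isT.
by move/eqP; rewrite sqrf_eq0 => /eqP.
Qed.

Lemma dot_self_gt0 x : x != 0 -> 0 < dot x x.
Proof. by rewrite lt_def dot_self_eq0 dot_self_ge0 andbT. Qed.

End Dot.

Section ConvexCombinations.
Variables (R : realType) (d : nat) (J : finType).
Implicit Types (a : J -> 'rV[R]_d) (S T : {set J}).

(* For finitely many x_i > 0 and arbitrary y_i, a single K >= 0 with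
   y_i < K x_i for all i; used to combine two separating directions. *)
Lemma exists_dominating_scale S (x y : J -> R) :
  (forall i, i \in S -> 0 < x i) ->
  exists K, 0 <= K /\ forall i, i \in S -> y i < K * x i.
Proof.
move=> x_gt0; pose K := \sum_(j in S) (`|y j| + 1) / x j.
have term_ge0 j : j \in S -> 0 <= (`|y j| + 1) / x j.
  by move=> jS; rewrite divr_ge0 ?addr_ge0 // ltW // x_gt0.
exists K; split; first exact: sumr_ge0.
move=> i iS; have xi_gt0 := x_gt0 i iS.
have le_K : (`|y i| + 1) / x i <= K.
  rewrite /K (big_setD1 i iS) /= lerDl; apply: sumr_ge0 => j.
  by rewrite in_setD1 => /andP [_]; exact: term_ge0.
have := ler_wpM2r (ltW xi_gt0) le_K; rewrite divfK ?gt_eqF //.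
have := ler_norm (y i); lra.
Qed.

Lemma convex_comb_lt0 S (w x : J -> R) :
  (forall j, 0 <= w j) -> \sum_(j in S) w j = 1 ->
  (forall j, j \in S -> x j < 0) -> \sum_(j in S) w j * x j < 0.
Proof.
move=> w_ge0 w_sum1 x_lt0.
have term_le0 j : j \in S -> w j * x j <= 0.
  by move=> jS; rewrite mulr_ge0_le0 // ltW // x_lt0.
rewrite lt_def sumr_le0 // andbT; apply/eqP => /esym sum0.
have w0 j : j \in S -> w j = 0.
  move=> jS; have sumN0 : \sum_(k in S) - (w k * x k) = 0 by rewrite sumrN sum0 oppr0.
  have termN_ge0 k : k \in S -> 0 <= - (w k * x k) by rewrite oppr_ge0; exact: term_le0.
  have := @psumr_eq0P _ _ (mem S) _ termN_ge0 sumN0 j jS.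
  by move/eqP; rewrite oppr_eq0 mulf_eq0 (lt_eqF (x_lt0 j jS)) orbF => /eqP.
by move: w_sum1; rewrite big1 // => /eqP; rewrite eq_sym oner_eq0.
Qed.

End ConvexCombinations.

Section Gordan.
Variables (R : realType) (d : nat) (J : finType).
Implicit Types (a : J -> 'rV[R]_d) (S T : {set J}) (b : J) (u v : 'rV[R]_d).

Lemma in_conv_subset a S T x : S \subset T -> in_conv a S x -> in_conv a T x.
Proof.
move=> ST [w [w_ge0 [w_sum1 w_bary]]].
have restrict (V : nmodType) (F : J -> V) :
    \sum_(j in T) (if j \in S then F j else 0) = \sum_(j in S) F j.
  by rewrite -big_mkcondr; apply: eq_bigl => j; apply: andb_idl => /(fintype.subsetP ST).
exists (fun j => if j \in S then w j else 0); split; first by move=> j; case: ifP.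
split; first by rewrite restrict.
by rewrite -w_bary -restrict; apply: eq_bigr => j _; case: ifP; rewrite ?scale0r.
Qed.

Lemma gordan_singleton a b :
  in_conv a [set b] 0 \/ exists v, forall i, i \in [set b] -> dot v (a i) < 0.
Proof.
have [ab0|abN0] := eqVneq (a b) 0.
  by left; exists (fun=> 1); rewrite !big_set1 scale1r ab0.
right; exists (- a b) => i; rewrite inE => /eqP ->.
by rewrite dotNl oppr_lt0 dot_self_gt0.
Qed.

(* The inductive step of Gordan's alternative adds a vector a b to a family
   {a j | j in S'} strictly separated from 0 by v, with dot v (a b) >= 0.
   The auxiliary family c j := dot v (a b) *: a j - dot v (a j) *: a b lies in
   the hyperplane orthogonal to v; the two alternatives for c are lifted here. *)
Definition gordan_aux a b v : J -> 'rV[R]_d :=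
  fun j => dot v (a b) *: a j - dot v (a j) *: a b.

Lemma gordan_conv_lift a b S' v : b \notin S' ->
  (forall j, j \in S' -> dot v (a j) < 0) -> 0 <= dot v (a b) ->
  in_conv (gordan_aux a b v) S' 0 -> in_conv a (b |: S') 0.
Proof.
move=> bNS' v_neg vb_ge0 [l [l_ge0 [l_sum1 l_bary]]].
set beta := dot v (a b) in vb_ge0 l_bary.
pose alpha := - \sum_(j in S') l j * dot v (a j).
have alpha_gt0 : 0 < alpha by rewrite oppr_gt0 convex_comb_lt0.
pose nu j := if j == b then alpha else l j * beta.
have nu_S' j : j \in S' -> nu j = l j * beta.
  by move=> jS'; rewrite /nu; case: eqP => // jb; rewrite -jb jS' in bNS'.
have nu_sum : \sum_(j in b |: S') nu j = alpha + beta.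
  by rewrite big_setU1 //= {1}/nu eqxx (eq_bigr _ nu_S') -mulr_suml l_sum1 mul1r.
have nu_bary : \sum_(j in b |: S') nu j *: a j = 0.
  rewrite big_setU1 //= {1}/nu eqxx -[RHS]l_bary /gordan_aux -/beta.
  under eq_bigr => j jS' do rewrite nu_S' //.
  under [RHS]eq_bigr do rewrite scalerBr !scalerA.
  by rewrite sumrB -scaler_suml addrC /alpha scaleNr.
have ab_gt0 : 0 < alpha + beta by rewrite ltr_pwDl.
exists (fun j => nu j / (alpha + beta)); split.
  move=> j; apply: divr_ge0; last exact: ltW.
  by rewrite /nu; case: ifP => _; [exact: ltW | exact: mulr_ge0].
split; first by rewrite -mulr_suml nu_sum divff ?gt_eqF.
rewrite (eq_bigr (fun j => (alpha + beta)^-1 *: (nu j *: a j))) => [|j _].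
  by rewrite -scaler_sumr nu_bary scaler0.
by rewrite scalerA mulrC.
Qed.

(* If u separates the c j from 0 and dot v (a b) = 0, then u + K v separates
   all the a j (K large); here S' must be nonempty to control dot u (a b). *)
Lemma gordan_sep_lift_flat a b S' v u j0 : j0 \in S' ->
  (forall j, j \in S' -> dot v (a j) < 0) -> dot v (a b) = 0 ->
  (forall j, j \in S' -> dot u (gordan_aux a b v j) < 0) ->
  exists w, forall i, i \in b |: S' -> dot w (a i) < 0.
Proof.
move=> j0S' v_neg vb0 u_neg.
have ub_lt0 : dot u (a b) < 0.
  have := u_neg j0 j0S'; have := v_neg j0 j0S'.
  rewrite /gordan_aux vb0 scale0r dotBr dot0r dotZr; nra.
have [K [_ K_dom]] : exists K, 0 <= K /\
    forall j, j \in S' -> dot u (a j) < K * - dot v (a j).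
  by apply: exists_dominating_scale => j jS'; rewrite oppr_gt0 v_neg.
exists (u + K *: v) => i; rewrite in_setU1 dotDl dotZl => /orP [/eqP ->|iS'].
  by rewrite vb0 mulr0 addr0.
by have := K_dom i iS'; rewrite mulrN; lra.
Qed.

(* If u separates the c j from 0 and dot v (a b) > 0, then K z - v separates
   all the a j, where z := dot v (a b) u - dot u (a b) v and K is large. *)
Lemma gordan_sep_lift_pos a b S' v u :
  (forall j, j \in S' -> dot v (a j) < 0) -> 0 < dot v (a b) ->
  (forall j, j \in S' -> dot u (gordan_aux a b v j) < 0) ->
  exists w, forall i, i \in b |: S' -> dot w (a i) < 0.
Proof.
move=> v_neg vb_gt0 u_neg.
pose z := dot v (a b) *: u - dot u (a b) *: v.
have z_aux j : dot z (a j) = dot u (gordan_aux a b v j).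
  by rewrite /z /gordan_aux dotBl dotBr !dotZl !dotZr [dot u (a b) * _]mulrC.
have [K [_ K_dom]] : exists K, 0 <= K /\
    forall j, j \in S' -> - dot v (a j) < K * - dot z (a j).
  by apply: exists_dominating_scale => j jS'; rewrite oppr_gt0 z_aux u_neg.
exists (K *: z - v) => i; rewrite in_setU1 dotBl dotZl => /orP [/eqP ->|iS'].
  by rewrite z_aux /gordan_aux subrr dot0r mulr0 sub0r oppr_lt0.
by have := K_dom i iS'; rewrite mulrN; lra.
Qed.

Theorem gordan_alternative a S :
  in_conv a S 0 \/ exists v, forall i, i \in S -> dot v (a i) < 0.
Proof.
move cardS : #|S| => n; elim: n a S cardS => [|n IH] a S cardS.
  right; exists 0 => i; move/eqP: cardS; rewrite cards_eq0 => /eqP ->.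
  by rewrite inE.
have [b bS] : exists b, b \in S by apply/set0Pn; rewrite -cards_eq0 cardS.
have bNS' : b \notin S :\ b by rewrite !inE eqxx.
have cardS' : #|S :\ b| = n by move: cardS; rewrite (cardsD1 b) bS => -[].
rewrite -(finset.setD1K bS); move: (S :\ b) bNS' cardS' => S' bNS' cardS'.
have [S'0|[j0 j0S']] := set_0Vmem S'; first by rewrite S'0 finset.setU0; exact: gordan_singleton.
have [conv_S'|[v v_neg]] := IH a S' cardS'.
  by left; apply: in_conv_subset conv_S'; exact: finset.subsetUr.
have [vb_lt0|vb_ge0] := ltP (dot v (a b)) 0.
  by right; exists v => i; rewrite in_setU1 => /orP [/eqP ->//|]; exact: v_neg.
have [conv_aux|[u u_neg]] := IH (gordan_aux a b v) S' cardS'.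
  by left; exact: gordan_conv_lift conv_aux.
right; move: vb_ge0; rewrite le_eqVlt => /orP [/eqP /esym vb0|vb_gt0].
  exact: gordan_sep_lift_flat j0S' v_neg vb0 u_neg.
exact: gordan_sep_lift_pos v_neg vb_gt0 u_neg.
Qed.

End Gordan.

Section ClosestPoint.
Variables (R : realType) (d : nat).
Implicit Types (h : hyp R d) (q v x : 'rV[R]_d).

Lemma sqdist_dot x q : sqdist x q = dot (x - q) (x - q).
Proof. by apply: eq_bigr => k _; rewrite !mxE expr2. Qed.

Definition proj h q : 'rV[R]_d :=
  q + ((hb h - dot (hn h) q) / dot (hn h) (hn h)) *: hn h.

Lemma proj_on h q : hn h != 0 -> on_hyp h (proj h q).
Proof.
move=> hn0; rewrite /on_hyp /proj dotDr dotZr.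
by field; rewrite gt_eqF // dot_self_gt0.
Qed.

(* Pythagoras: q - proj h q is orthogonal to h. *)
Lemma proj_pythagoras h q x : hn h != 0 -> on_hyp h x ->
  sqdist q x = sqdist q (proj h q) + dot (x - proj h q) (x - proj h q).
Proof.
move=> hn0 hx; have hp := proj_on q hn0.
have orth : dot (q - proj h q) (x - proj h q) = 0.
  have -> : q - proj h q = - ((hb h - dot (hn h) q) / dot (hn h) (hn h)) *: hn h.
    by rewrite /proj scaleNr opprD addrA subrr add0r.
  by rewrite dotZl dotBr hx hp subrr mulr0.
rewrite !sqdist_dot.
have -> : q - x = (q - proj h q) - (x - proj h q) by rewrite opprB addrA subrK.
move: (q - proj h q) (x - proj h q) orth => f e orth.
by rewrite !dotBl !dotBr (dotC e f) orth; lra.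
Qed.

Lemma closest_proj h q : hn h != 0 -> closest h q = proj h q.
Proof.
move=> hn0; apply: xget_unique.
  split; first exact: proj_on.
  by move=> y hy; rewrite (proj_pythagoras q hn0 hy) lerDl dot_self_ge0.
move=> y [hy y_min]; have := y_min _ (proj_on q hn0).
rewrite (proj_pythagoras q hn0 hy) gerDl => sq_le0.
by apply/eqP; rewrite -subr_eq0 -dot_self_eq0 eq_le sq_le0 dot_self_ge0.
Qed.

(* The ray from q in direction v hits h iff q + t v lands on h for a
   parameter t of the same sign as the offset of h from q. *)
Lemma ray_hitsE h q v :
  ray_hits h q v <-> 0 <= (hb h - dot (hn h) q) * dot (hn h) v.
Proof.
rewrite /ray_hits /on_hyp.
have hitE t : dot (hn h) (q + t *: v) = hb h <->
    hb h - dot (hn h) q = t * dot (hn h) v.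
  by rewrite dotDr dotZr; split => ?; lra.
split.
  case=> [[t [t_ge0 /hitE ->]]|->]; last by rewrite mulr0.
  by rewrite -mulrA mulr_ge0 // -expr2 sqr_ge0.
have [nv0|nvN0] := eqVneq (dot (hn h) v) 0; first by right.
move=> gap_nv; left; exists ((hb h - dot (hn h) q) / dot (hn h) v); split.
  have -> : (hb h - dot (hn h) q) / dot (hn h) v =
      (hb h - dot (hn h) q) * dot (hn h) v / dot (hn h) v ^+ 2 by field.
  by rewrite divr_ge0 // sqr_ge0.
by apply/hitE; rewrite divfK.
Qed.

Lemma ray_hits_closest h q v : hn h != 0 ->
  ray_hits h q v <-> 0 <= dot v (closest h q - q).
Proof.
move=> hn0; have inv_gt0 : 0 < (dot (hn h) (hn h))^-1.
  by rewrite invr_gt0 dot_self_gt0.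
rewrite (propext (ray_hitsE h q v)) closest_proj // /proj (addrC q) addrK.
by rewrite dotZr (dotC v) mulrAC (pmulr_lge0 _ inv_gt0).
Qed.

End ClosestPoint.

Section NatMin.
Implicit Types P : set nat.

Lemma natmin_spec P : (exists n, P n) ->
  P (natmin P) /\ forall j, P j -> (natmin P <= j)%N.
Proof.
move=> [n Pn]; apply: (xgetPex 0%N (P := [set k | P k /\ forall j, P j -> (k <= j)%N])).
have ex : exists k, `[< P k >] by exists n; apply/asboolP.
case: (ex_minnP ex) => m /asboolP Pm m_min; exists m; split => // j Pj.
by apply: m_min; apply/asboolP.
Qed.

Lemma natmin_empty P : (forall n, ~ P n) -> natmin P = 0%N.
Proof. by move=> noP; apply: xgetPN => k [Pk _]; exact: noP Pk. Qed.

Lemma natmin_eq P1 P2 : (forall k, P1 k -> P2 k) ->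
  (forall k, P2 k -> exists2 k', P1 k' & (k' <= k)%N) -> natmin P1 = natmin P2.
Proof.
move=> sub12 dom21; have [ex1|nex1] := pselect (exists k, P1 k); last first.
  rewrite !natmin_empty // => k; last by move=> P1k; apply: nex1; exists k.
  by move=> /dom21 [k' P1k' _]; apply: nex1; exists k'.
have [P1min min1] := natmin_spec ex1.
have [P2min min2] := natmin_spec (ex_intro _ _ (sub12 _ P1min)).
apply/eqP; rewrite eqn_leq min2 ?andbT; last exact: sub12.
by have [k' P1k' k'_le] := dom21 _ P2min; exact: leq_trans (min1 _ P1k') k'_le.
Qed.

Lemma natmin_gt0 P : (0 < natmin P)%N <-> (exists n, P n) /\ ~ P 0%N.
Proof.
split=> [min_gt0|[ex nP0]].
  have ex : exists n, P n.
    by apply: contrapT => nex; move: min_gt0; rewrite natmin_empty // => n Pn; apply: nex; exists n.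
  split=> // P0; have [_ /(_ _ P0)] := natmin_spec ex.
  by rewrite leqn0 => /eqP min0; rewrite min0 in min_gt0.
by have [Pmin _] := natmin_spec ex; rewrite lt0n; apply/eqP => min0; rewrite min0 in Pmin.
Qed.

End NatMin.

Section Duality.
Variables (R : realType) (d : nat).

Lemma in_conv_translate (J : finType) (p : J -> 'rV[R]_d) S q :
  in_conv p S q <-> in_conv (fun i => p i - q) S 0.
Proof.
split=> -[w [w_ge0 [w_sum1 w_bary]]]; exists w; do 2!split => //.
  under eq_bigr do rewrite scalerBr.
  by rewrite sumrB w_bary -scaler_suml w_sum1 scale1r subrr.
move: w_bary; under eq_bigr do rewrite scalerBr.
by rewrite sumrB -scaler_suml w_sum1 scale1r => /eqP; rewrite subr_eq0 => /eqP.
Qed.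

Lemma ray_count_dual (J : finType) (A : J -> hyp R d) (S : {set J}) q v :
  (forall i, hn (A i) != 0) ->
  #|[set i in S | `[< ray_hits (A i) q v >] ]| =
  #|[set i in S | 0 <= dot v (dual A q i - q)]|.
Proof.
move=> hA; apply: eq_card => i; rewrite !inE.
by rewrite (propext (ray_hits_closest q v (hA i))) asboolb.
Qed.

(* Regression depth zero means that some direction misses every hyperplane,
   i.e. strictly separates the dual points from q. *)
Lemma RD_gt0 (J : finType) (A : J -> hyp R d) (S : {set J}) q :
  (forall i, hn (A i) != 0) ->
  (0 < RD A S q)%N <-> (exists v : 'rV[R]_d, v != 0) /\
    ~ exists v, v != 0 /\ forall i, i \in S -> dot v (dual A q i - q) < 0.
Proof.
move=> hA.
have missing_ray v : (0%N = #|[set i in S | `[< ray_hits (A i) q v >] ]|) <->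
    forall i, i \in S -> dot v (dual A q i - q) < 0.
  rewrite ray_count_dual //; split=> [/esym/eqP|sep].
    rewrite cards_eq0 => /eqP none i iS; rewrite ltNge; apply/negP => ge0.
    have : i \in [set i in S | 0 <= dot v (dual A q i - q)] by rewrite inE iS ge0.
    by rewrite none inE.
  apply/esym/eq_card0 => i; rewrite !inE; apply/negbTE/negP => /andP [iS].
  by rewrite leNgt sep.
apply: iff_trans (natmin_gt0 _) _.
split=> [[[k [v [vN0 _]]] nsep]|[[v vN0] nsep]]; split.
- by exists v.
- by move=> [w [wN0 /missing_ray sep]]; apply: nsep; exists w.
- by exists #|[set i in S | `[< ray_hits (A i) q v >] ]|, v.
- by move=> [w [wN0 /missing_ray sep]]; apply: nsep; exists w.
Qed.

(* Key duality: q has positive regression depth w.r.t. the hyperplanes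
   {A i | i in S} iff q lies in the convex hull of their dual points;
   the nontrivial direction is Gordan's alternative. *)
Lemma RD_gt0_in_conv (J : finType) (A : J -> hyp R d) (S : {set J}) q :
  (forall i, hn (A i) != 0) ->
  (0 < RD A S q)%N <-> in_conv (dual A q) S q.
Proof.
move=> hA; apply: iff_trans (RD_gt0 S q hA) _.
apply: iff_trans _ (iff_sym (in_conv_translate _ _ _)).
split=> [[[w wN0] nsep]|conv0].
  have [//|[v sep]] := gordan_alternative (fun i => dual A q i - q) S.
  exfalso; apply: nsep; have [v0|vN0] := eqVneq v 0; last by exists v.
  by exists w; split=> // i iS; have := sep i iS; rewrite v0 dot0l ltxx.
have [w [w_ge0 [w_sum1 w_bary]]] := conv0.
split.
  have [S0|[i0 i0S]] := set_0Vmem S.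
    by move: w_sum1; rewrite S0 big_set0 => /eqP; rewrite eq_sym oner_eq0.
  by exists (hn (A i0)).
move=> [v [_ sep]]; have := convex_comb_lt0 w_ge0 w_sum1 sep.
under eq_bigr do rewrite -dotZr.
by rewrite -dot_sumr w_bary dot0r ltxx.
Qed.

Variables (I : finType) (A : I -> hyp R d) (q : 'rV[R]_d).
Hypothesis normal_neq0 : forall i, hn (A i) != 0.

(* (1) Every ray count is a half-space count with boundary through q, and every
   closed half-space containing q contains such a half-space. *)
Lemma RD_eq_TD : RD A [set: I] q = TD (dual A q) q.
Proof.
have count v : #|[set i in [set: I] | `[< ray_hits (A i) q v >] ]| =
    #|[set i | dot (- v) (dual A q i) <= dot (- v) q]|.
  rewrite ray_count_dual //; apply: eq_card => i.
  by rewrite !inE dotBr subr_ge0 !dotNl lerN2.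
apply: natmin_eq => [k [v [vN0 ->]]|k [c [e [cN0 [ce ->]]]]].
  by exists (- v), (dot (- v) q); rewrite oppr_eq0 lexx count.
exists #|[set i in [set: I] | `[< ray_hits (A i) q (- c) >] ]|.
  by exists (- c); rewrite oppr_eq0.
rewrite count opprK; apply: subset_leq_card; apply/fintype.subsetP => i.
by rewrite !inE => le_q; exact: le_trans le_q ce.
Qed.

Lemma HTvD_eq_TvD : HTvD A q = TvD (dual A q) q.
Proof.
rewrite /HTvD /TvD; congr natmax; apply/funext => r; apply/propext.
by split=> -[f parts]; exists f => j; apply/RD_gt0_in_conv.
Qed.

Lemma HED_eq_ED : HED A q = ED (dual A q) q.
Proof.
have encloseE (s : 'I_d.+1 -> I) :
    (1 <= RD (fun j => A (s j)) [set: 'I_d.+1] q)%N <->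
    in_conv (fun j => dual A q (s j)) [set: 'I_d.+1] q.
  exact: RD_gt0_in_conv.
rewrite /HED /ED; congr natmax; apply/funext => k; apply/propext.
by split=> -[P [P_ok enclose]]; exists P; split=> // s /enclose /encloseE.
Qed.

End Duality.

Theorem corollary2p2 (R : realType) (d : nat) (I : finType)
  (A : I -> hyp R d) (q : 'rV[R]_d) :
  general_position A ->
  RD A [set: I] q = TD (dual A q) q /\
  HTvD A q = TvD (dual A q) q /\
  HED A q = ED (dual A q) q.
Proof.
move=> [normal_neq0 _].
by split; [|split]; [exact: RD_eq_TD | exact: HTvD_eq_TvD | exact: HED_eq_ED].
Qed.
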